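(* Consider an RBM with observed variables $X\in\{-1,1\}^n$ and width $\beta^*$ as in the context, and let $\gamma^*$ be the modified width of the MRF of the observed variables. Then $\gamma^*\le\beta^*$.
   Context: RBM: $\mathbb{P}(X=x,Y=y)\propto\exp(x^TJy+h^Tx+g^Ty)$ over observed $X\in\{-1,1\}^n$ and latent $Y\in\{-1,1\}^m$, $J\in\mathbb{R}^{n\times m}$, $h\in\mathbb{R}^n$, $g\in\mathbb{R}^m$. Its width is $\beta^*:=\max\big(\max_{i\in[n]}\sum_{j=1}^m|J_{i,j}|+|h_i|,\ \max_{j\in[m]}\sum_{i=1}^n|J_{i,j}|+|g_j|\big)$. The marginal of $X$ is $\propto\exp(f(x))$, $f(x)=\sum_j\rho(J_j\cdot x+g_j)+h^Tx$, $\rho(t)=\log(e^t+e^{-t})$, $J_j$ the $j$-th column of $J$; $f=\sum_{T\subseteq[n]}\hat f(T)\chi_T$, $\chi_T(x)=\prod_{i\in T}x_i$. The modified width is $\gamma^*:=\max_{u\in[n]}\max_{I\subseteq[n]\setminus\{u\}}\max_{x\in\{-1,1\}^n}\big|\sum_{T\subseteq I}\hat f(T\cup\{u\})\chi_{T\cup\{u\}}(x)\big|$. *)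

From HB Require Import structures.
From mathcomp Require Import all_boot all_order all_algebra.
From mathcomp Require Import reals sequences exp.
Set Implicit Arguments. Unset Strict Implicit. Unset Printing Implicit Defensive.
Import Order.TTheory GRing.Theory Num.Theory.
Local Open Scope ring_scope.

Section RBM.
Variable R : realType.

(* A point x of {-1,1}^n is encoded as x : {ffun 'I_n -> bool}, with
   coordinate value spin (x i) (true |-> 1, false |-> -1). *)
Definition spin (b : bool) : R := if b then 1 else -1.

Definition cube (n : nat) := {ffun 'I_n -> bool}.

Definition chi (n : nat) (T : {set 'I_n}) (x : cube n) : R :=
  \prod_(i in T) spin (x i).

Definition rho (t : R) : R := ln (expR t + expR (- t)).

Definition rbm_f (n m : nat) (J : 'M[R]_(n, m)) (h : 'I_n -> R) (g : 'I_m -> R)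
  (x : cube n) : R :=
  \sum_(j < m) rho (\sum_(i < n) J i j * spin (x i) + g j)
  + \sum_(i < n) h i * spin (x i).

Definition fourier (n : nat) (f : cube n -> R) (T : {set 'I_n}) : R :=
  (2 ^+ n)^-1 * \sum_(x : cube n) f x * chi T x.

Definition rbm_width (n m : nat) (J : 'M[R]_(n, m)) (h : 'I_n -> R)
  (g : 'I_m -> R) : R :=
  Num.max (\big[Num.max/0]_(i < n) (\sum_(j < m) `|J i j| + `|h i|))
          (\big[Num.max/0]_(j < m) (\sum_(i < n) `|J i j| + `|g j|)).

(* modified width gamma* (all quantities maximized are >= 0, so 0 is a
   harmless identity for the iterated max) *)
Definition mod_width (n : nat) (f : cube n -> R) : R :=
  \big[Num.max/0]_(u : 'I_n)
   \big[Num.max/0]_(I : {set 'I_n} | u \notin I)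
    \big[Num.max/0]_(x : cube n)
      `| \sum_(T : {set 'I_n} | T \subset I) fourier f (u |: T) * chi (u |: T) x |.

End RBM.

From HB Require Import structures.
From mathcomp Require Import all_boot all_order all_algebra.
From mathcomp Require Import reals sequences exp.
From mathcomp Require Import ring lra.
Set Implicit Arguments. Unset Strict Implicit. Unset Printing Implicit Defensive.
Import Order.TTheory GRing.Theory Num.Theory.
Local Open Scope ring_scope.

(* Write y^u for y with coordinate u flipped and xy for the coordinatewise
   product of spins. For u \notin I,
     \sum_(T \subset I) fhat(u |: T) chi_(u |: T)(x)
       = 2^-n \sum_y f(y) x_u y_u K_I(xy),
   where K_I(z) = \sum_(T \subset I) chi_T(z) = \prod_(i in I) (1 + z_i) is
   nonnegative, has total mass 2^n and is invariant under flipping u. Pairing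
   y with y^u bounds the sum by max_y |f(y) - f(y^u)| / 2. For the RBM marginal,
   flipping x_u moves h^T x by 2|h_u| and, rho being 1-Lipschitz, each
   rho(J_j . x + g_j) by at most 2|J_uj|: this is the u-th row sum of beta*. *)

Lemma sum_subset_prod (R : comPzSemiRingType) (T : finType) (I : {set T})
    (s : T -> R) :
  \sum_(A : {set T} | A \subset I) \prod_(i in A) s i = \prod_(i in I) (1 + s i).
Proof.
have -> : \prod_(i in I) (1 + s i) = \prod_i ((if i \in I then s i else 0) + 1).
  rewrite [RHS](bigID (mem I)) /= [X in _ * X]big1 ?mulr1 => [|i /negbTE ->].
    by apply: eq_bigr => i ->; rewrite addrC.
  by rewrite add0r.
rewrite bigA_distr /= [RHS](bigID (fun A : {set T} => A \subset I)) /=.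
rewrite [X in _ = _ + X]big1 ?addr0 => [|A /subsetPn[i iA iI]]; last first.
  by rewrite (bigD1 i) //= iA (negbTE iI) mul0r.
apply: eq_bigr => A /subsetP AI; rewrite big_mkcond; apply: eq_bigr => i _.
by case: ifP => // /AI ->.
Qed.

Section Cube.
Variables (R : realType) (n : nat).

Lemma spinN b : spin R (~~ b) = - spin R b.
Proof. by case: b; rewrite /spin ?opprK. Qed.

Lemma normr_spin b : `|spin R b| = 1.
Proof. by case: b; rewrite /spin ?normrN normr1. Qed.

Definition cube_flip (u : 'I_n) (y : cube n) : cube n :=
  [ffun i => if i == u then ~~ y i else y i].

(* spin (x i == y i) = spin (x i) * spin (y i) *)
Definition cube_mul (x y : cube n) : cube n := [ffun i => x i == y i].

Lemma cube_flipK u : involutive (cube_flip u).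
Proof.
by move=> y; apply/ffunP => i; rewrite !ffunE; case: (i == u); rewrite ?negbK.
Qed.

Lemma cube_mulK x : involutive (cube_mul x).
Proof. by move=> y; apply/ffunP => i; rewrite !ffunE; case: (x i); case: (y i). Qed.

Lemma cube_mul_flip x y u : cube_mul x (cube_flip u y) = cube_flip u (cube_mul x y).
Proof.
apply/ffunP => i; rewrite !ffunE; case: (i == u) => //.
by case: (x i); case: (y i).
Qed.

Lemma chiM (T : {set 'I_n}) x y : chi R T x * chi R T y = chi R T (cube_mul x y).
Proof.
rewrite /chi -big_split; apply: eq_bigr => i _; rewrite ffunE.
by case: (x i); case: (y i); rewrite /spin /=; ring.
Qed.

Lemma chi_setU1 (T : {set 'I_n}) u z :
  u \notin T -> chi R (u |: T) z = spin R (z u) * chi R T z.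
Proof. by move=> uT; rewrite /chi big_setU1. Qed.

Lemma chi_flip_in (T : {set 'I_n}) u y :
  u \in T -> chi R T (cube_flip u y) = - chi R T y.
Proof.
move=> uT; rewrite /chi (bigD1 u) //= [in RHS](bigD1 u) //= ffunE eqxx spinN mulNr.
by congr (- (_ * _)); apply: eq_bigr => i /andP[_ /negbTE iu]; rewrite ffunE iu.
Qed.

Lemma chi_flip_notin (T : {set 'I_n}) u y :
  u \notin T -> chi R T (cube_flip u y) = chi R T y.
Proof.
move=> uT; apply: eq_bigr => i iT; rewrite ffunE.
by have /negbTE -> : i != u by apply: contraNneq uT => <-.
Qed.

Lemma sum_chi (T : {set 'I_n}) :
  \sum_(y : cube n) chi R T y = if T == set0 then 2 ^+ n else 0.
Proof.
case: eqP => [->|/eqP/set0Pn[u uT]].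
  under eq_bigr do rewrite /chi big_set0.
  by rewrite sumr_const card_ffun card_bool card_ord natrX.
have : \sum_y chi R T y = - \sum_y chi R T y.
  rewrite {1}(reindex_inj (can_inj (cube_flipK u))) -sumrN /=.
  by apply: eq_bigr => y _; rewrite chi_flip_in.
lra.
Qed.

Definition subset_kernel (I : {set 'I_n}) (z : cube n) : R :=
  \sum_(T : {set 'I_n} | T \subset I) chi R T z.

Lemma subset_kernel_ge0 (I : {set 'I_n}) z : 0 <= subset_kernel I z.
Proof.
rewrite /subset_kernel sum_subset_prod; apply: prodr_ge0 => i _.
by case: (z i); rewrite /spin; lra.
Qed.

Lemma subset_kernel_flip (I : {set 'I_n}) u z :
  u \notin I -> subset_kernel I (cube_flip u z) = subset_kernel I z.
Proof.
move=> uI; apply: eq_bigr => T TI; apply: chi_flip_notin.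
by apply: contra uI; apply: (subsetP TI).
Qed.

Lemma sum_subset_kernel (I : {set 'I_n}) :
  \sum_(z : cube n) subset_kernel I z = 2 ^+ n.
Proof.
rewrite exchange_big /= (bigD1 set0) ?sub0set //= sum_chi eqxx.
by rewrite big1 ?addr0 // => T /andP[_ /negbTE T0]; rewrite sum_chi T0.
Qed.

Lemma fourier_mul_chi (F : cube n -> R) (T : {set 'I_n}) x :
  fourier F T * chi R T x = (2 ^+ n)^-1 * \sum_y F y * chi R T (cube_mul x y).
Proof.
rewrite /fourier -mulrA mulr_suml; congr (_ * _).
by apply: eq_bigr => y _; rewrite -mulrA [X in _ * X]mulrC chiM.
Qed.

Lemma sum_flip_antisym (F w : cube n -> R) u :
  (forall y, w (cube_flip u y) = - w y) ->
  \sum_y (F y - F (cube_flip u y)) * w y = 2 * \sum_y F y * w y.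
Proof.
move=> w_flip; under eq_bigr do rewrite mulrBl; rewrite sumrB.
have -> : \sum_y F (cube_flip u y) * w y = - \sum_y F y * w y.
  rewrite [in RHS](reindex_inj (can_inj (cube_flipK u))) -sumrN /=.
  by apply: eq_bigr => y _; rewrite w_flip mulrN opprK.
by rewrite opprK mulr2n mulrDl !mul1r.
Qed.

Lemma norm_sum_fourier_setU1_le (F : cube n -> R) u (I : {set 'I_n}) x B :
  u \notin I -> (forall y, `|F y - F (cube_flip u y)| <= 2 * B) ->
  `|\sum_(T : {set 'I_n} | T \subset I) fourier F (u |: T) * chi R (u |: T) x| <= B.
Proof.
move=> uI dF.
pose w y := spin R (cube_mul x y u) * subset_kernel I (cube_mul x y).
have -> : \sum_(T : {set 'I_n} | T \subset I) fourier F (u |: T) * chi R (u |: T) x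
    = (2 ^+ n)^-1 * \sum_y F y * w y.
  under eq_bigr do rewrite fourier_mul_chi.
  rewrite -mulr_sumr exchange_big /=; congr (_ * _); apply: eq_bigr => y _.
  rewrite /w /subset_kernel !mulr_sumr; apply: eq_bigr => T TI.
  have uT : u \notin T by apply: contra uI; apply: (subsetP TI).
  by rewrite chi_setU1 // !mulrA.
have w_flip y : w (cube_flip u y) = - w y.
  by rewrite /w cube_mul_flip subset_kernel_flip // ffunE eqxx spinN mulNr.
have sum_norm_w : \sum_y `|w y| = 2 ^+ n.
  under eq_bigr do
    rewrite normrM normr_spin mul1r (ger0_norm (subset_kernel_ge0 _ _)).
  by rewrite -(sum_subset_kernel I) [RHS](reindex_inj (can_inj (cube_mulK x))).
have pos2n : 0 < 2 ^+ n :> R by apply: exprn_gt0.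
have : `|2 * \sum_y F y * w y| <= 2 * B * 2 ^+ n.
  rewrite -(sum_flip_antisym F w_flip) -sum_norm_w mulr_sumr.
  apply: le_trans (ler_norm_sum _ _ _) _; apply: ler_sum => y _.
  by rewrite normrM ler_wpM2r.
rewrite normrM [`|2|]ger0_norm // => bound.
rewrite normrM [`|_^-1|]ger0_norm ?invr_ge0 ?(ltW pos2n) //.
rewrite mulrC ler_pdivrMr //; lra.
Qed.

Lemma mod_width_le (F : cube n -> R) B : 0 <= B ->
  (forall u y, `|F y - F (cube_flip u y)| <= 2 * B) -> mod_width F <= B.
Proof.
move=> B0 dF; apply: bigmax_le => // u _; apply: bigmax_le => // I uI.
by apply: bigmax_le => // x _; apply: norm_sum_fourier_setU1_le.
Qed.

Lemma rho_le_dist (a b : R) : rho a <= rho b + `|a - b|.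
Proof.
rewrite /rho -[`|a - b|]expRK -lnM ?posrE ?addr_gt0 ?expR_gt0 //.
rewrite ler_ln ?posrE ?mulr_gt0 ?addr_gt0 ?expR_gt0 //.
rewrite mulrDl -!expRD lerD // ler_expR.
  by have := ler_norm (a - b); lra.
by have := ler_norm (b - a); rewrite distrC; lra.
Qed.

Lemma rho_lipschitz (a b : R) : `|rho a - rho b| <= `|a - b|.
Proof.
have := rho_le_dist a b; have := rho_le_dist b a.
by rewrite (distrC b a) ler_norml => *; apply/andP; split; lra.
Qed.

Lemma linear_flip_diff (c : 'I_n -> R) (y : cube n) u :
  \sum_i c i * spin R (y i) - \sum_i c i * spin R (cube_flip u y i)
    = c u * (2 * spin R (y u)).
Proof.
rewrite -sumrB (bigD1 u) //= big1 ?addr0 => [|i /negbTE iu]; last first.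
  by rewrite ffunE iu subrr.
by rewrite ffunE eqxx spinN; ring.
Qed.

Lemma normr_2spin b : `|2 * spin R b| = 2.
Proof. by rewrite normrM normr_spin mulr1 ger0_norm. Qed.

Lemma rbm_f_flip_le m (J : 'M[R]_(n, m)) h g y u :
  `|rbm_f J h g y - rbm_f J h g (cube_flip u y)| <= 2 * (\sum_j `|J u j| + `|h u|).
Proof.
rewrite /rbm_f opprD addrACA -sumrB linear_flip_diff.
apply: le_trans (ler_normD _ _) _; rewrite mulrDr lerD //; last first.
  by rewrite normrM normr_2spin mulrC.
apply: le_trans (ler_norm_sum _ _ _) _; rewrite mulr_sumr; apply: ler_sum => j _.
apply: le_trans (rho_lipschitz _ _) _.
by rewrite opprD addrACA subrr addr0 linear_flip_diff normrM normr_2spin mulrC.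
Qed.

Lemma row_le_rbm_width m (J : 'M[R]_(n, m)) h g u :
  \sum_j `|J u j| + `|h u| <= rbm_width J h g.
Proof. by rewrite le_max (le_bigmax _ (fun i => \sum_j `|J i j| + `|h i|)). Qed.

Lemma rbm_width_ge0 m (J : 'M[R]_(n, m)) h g : 0 <= rbm_width J h g.
Proof. by rewrite le_max bigmax_ge_id. Qed.

End Cube.

Theorem lemma24 (R : realType) (n m : nat) (J : 'M[R]_(n, m))
  (h : 'I_n -> R) (g : 'I_m -> R) :
  mod_width (rbm_f J h g) <= rbm_width J h g.
Proof.
apply: mod_width_le => [|u y]; first exact: rbm_width_ge0.
apply: le_trans (rbm_f_flip_le J h g y u) _.
by rewrite ler_pM2l ?row_le_rbm_width.
Qed.
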